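(* Let $(M,g)$ be a Ricci-flat Riemannian $4$-manifold. For $p \in M$ let $K_{max}(p)$ (respectively $K_{min}(p)$) denote the maximum (respectively the minimum) of the sectional curvatures of $2$-planes in $T_pM$. Then $$-\tfrac{1}{2}K_{min}(p) \le K_{max}(p) \le -2K_{min}(p)$$ for every $p \in M$. *)

From mathcomp Require Import all_boot all_order all_algebra.
From mathcomp Require Import boolp classical_sets reals.
Set Implicit Arguments. Unset Strict Implicit. Unset Printing Implicit Defensive.
Import Order.TTheory GRing.Theory Num.Theory.
Local Open Scope ring_scope.
Local Open Scope classical_set_scope.

(* The tangent space T_pM of a Riemannian 4-manifold at p, with an
   orthonormal basis, is identified isometrically with Euclidean R^4.
   The Riemann curvature tensor at p is given by its components
   Rm i j k l = R(e_i,e_j,e_k,e_l) in that orthonormal basis. *)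

Section Defs.
Variable R : realType.

Definition vec4 := 'rV[R]_4.

Definition dot4 (u v : vec4) : R := \sum_(i < 4) u 0 i * v 0 i.

Definition curv4 (Rm : 'I_4 -> 'I_4 -> 'I_4 -> 'I_4 -> R) (x y z w : vec4) : R :=
  \sum_(i < 4) \sum_(j < 4) \sum_(k < 4) \sum_(l < 4)
     Rm i j k l * x 0 i * y 0 j * z 0 k * w 0 l.

Definition is_curvature_tensor (Rm : 'I_4 -> 'I_4 -> 'I_4 -> 'I_4 -> R) : Prop :=
  [/\ (forall i j k l, Rm i j k l = - Rm j i k l),
      (forall i j k l, Rm i j k l = - Rm i j l k),
      (forall i j k l, Rm i j k l = Rm k l i j) &
      (forall i j k l, Rm i j k l + Rm j k i l + Rm k i j l = 0)].

Definition ricci (Rm : 'I_4 -> 'I_4 -> 'I_4 -> 'I_4 -> R) (j k : 'I_4) : R :=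
  \sum_(i < 4) Rm i j k i.

Definition ricci_flat (Rm : 'I_4 -> 'I_4 -> 'I_4 -> 'I_4 -> R) : Prop :=
  forall j k, ricci Rm j k = 0.

Definition lin_indep2 (u v : vec4) : Prop :=
  forall a b : R, a *: u + b *: v = 0 -> a = 0 /\ b = 0.

Definition sectional (Rm : 'I_4 -> 'I_4 -> 'I_4 -> 'I_4 -> R) (u v : vec4) : R :=
  curv4 Rm u v v u / (dot4 u u * dot4 v v - (dot4 u v) ^+ 2).

Definition sectional_values (Rm : 'I_4 -> 'I_4 -> 'I_4 -> 'I_4 -> R) : set R :=
  [set x | exists u v : vec4, lin_indep2 u v /\ x = sectional Rm u v].

(* K_max and K_min: max/min of the sectional curvatures (attained, by compactness
   of the Grassmannian, so they equal sup/inf) *)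
Definition Kmax (Rm : 'I_4 -> 'I_4 -> 'I_4 -> 'I_4 -> R) : R := sup (sectional_values Rm).
Definition Kmin (Rm : 'I_4 -> 'I_4 -> 'I_4 -> 'I_4 -> R) : R := inf (sectional_values Rm).

End Defs.

(* Ricci-flatness says that for a unit vector u and an orthonormal frame
   (u, e2, e3, e4), K(u,e2) + K(u,e3) + K(u,e4) = 0.  Every plane through u is
   spanned by u and some e2 orthogonal to u, and the frame can always be
   completed (by right multiplication with a pure quaternion).  Hence each
   sectional curvature K is minus the sum of two others, one of which is at
   most -K/2 and one at least -K/2; this gives K_min <= -K_max/2 and
   K_max >= -K_min/2. *)
From mathcomp Require Import all_boot all_order all_algebra.
From mathcomp Require Import boolp classical_sets reals.
From mathcomp Require Import ring lra.
Set Implicit Arguments. Unset Strict Implicit. Unset Printing Implicit Defensive.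
Import Order.TTheory GRing.Theory Num.Theory.
Local Open Scope ring_scope.

Section SupInf.
Local Open Scope classical_set_scope.

Lemma sup_inf_of_opposite_pairs (R : realType) (S : set R) :
  (forall x, S x -> exists y z, [/\ S y, S z & y + z = - x]) ->
  - (1 / 2) * inf S <= sup S /\ sup S <= - 2 * inf S.
Proof.
move=> HS.
have H x : S x -> (exists2 y, S y & y <= - x / 2) /\ (exists2 y, S y & - x / 2 <= y).
  case/HS => y [z [Sy Sz yz]].
  have [le_yz|lt_zy] := lerP y z.
  - by split; [exists y | exists z] => //; lra.
  - by split; [exists z | exists y] => //; lra.
have [[x0 Sx0]|S0] := pselect (S !=set0); last first.
  have -> : S = set0 by apply/seteqP; split => x // Sx; apply: S0; exists x.
  by rewrite sup0 inf0; split; lra.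
have ub_lb : has_ubound S -> has_lbound S.
  case=> M HM; exists (- 2 * M) => x Sx.
  have [_ [y Sy Hy]] := H x Sx; have := HM y Sy; rewrite /=; lra.
have lb_ub : has_lbound S -> has_ubound S.
  case=> M HM; exists (- 2 * M) => x Sx.
  have [[y Sy Hy] _] := H x Sx; have := HM y Sy; rewrite /=; lra.
have [hu|hu] := pselect (has_ubound S); last first.
  have hl : ~ has_lbound S by move/lb_ub.
  rewrite sup_out; last by case.
  rewrite inf_out; last by case.
  by split; lra.
have hl := ub_lb hu.
split.
  suff : - 2 * sup S <= inf S by lra.
  apply: lb_le_inf; first by exists x0.
  move=> x Sx; have [_ [y Sy Hy]] := H x Sx.
  by have := ub_le_sup hu Sy; rewrite /=; lra.
apply: ge_sup; first by exists x0.
move=> x Sx; have [[y Sy Hy] _] := H x Sx.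
by have := ge_inf hl Sy; rewrite /=; lra.
Qed.

End SupInf.

Section Euclid4.
Variable R : realType.

Definition o0 : 'I_4 := @Ordinal 4 0 erefl.
Definition o1 : 'I_4 := @Ordinal 4 1 erefl.
Definition o2 : 'I_4 := @Ordinal 4 2 erefl.
Definition o3 : 'I_4 := @Ordinal 4 3 erefl.

Lemma dot4E (u v : vec4 R) : dot4 u v =
  u 0 o0 * v 0 o0 + u 0 o1 * v 0 o1 + u 0 o2 * v 0 o2 + u 0 o3 * v 0 o3.
Proof.
rewrite /dot4 !big_ord_recr big_ord0 /= add0r.
by congr (_ + _ + _ + _); congr (u 0 _ * v 0 _); apply: val_inj.
Qed.

Lemma dot4C (x y : vec4 R) : dot4 x y = dot4 y x.
Proof. by rewrite !dot4E; ring. Qed.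

Lemma dot4Dr (x y z : vec4 R) a b :
  dot4 x (a *: y + b *: z) = a * dot4 x y + b * dot4 x z.
Proof. by rewrite !dot4E !mxE /=; ring. Qed.

Lemma dot40r (x : vec4 R) : dot4 x 0 = 0.
Proof. by rewrite /dot4 big1 // => i _; rewrite mxE mulr0. Qed.

Lemma dot4_eq0 (x : vec4 R) : dot4 x x = 0 -> x = 0.
Proof.
move=> H; apply/matrixP => i j; rewrite (ord1 i) mxE.
have sqr_coord_ge0 (k : 'I_4) : true -> 0 <= x 0 k * x 0 k by rewrite -expr2 sqr_ge0.
by move/eqP: (psumr_eq0P sqr_coord_ge0 H (i := j) isT); rewrite mulf_eq0 orbb => /eqP.
Qed.

Lemma lin_indep2_dot4_neq0 (u v : vec4 R) : lin_indep2 u v -> dot4 u u != 0.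
Proof.
move=> Hi; apply/eqP => /dot4_eq0 u0.
have [] := Hi 1 0; first by rewrite u0 scaler0 scale0r addr0.
by move/eqP; rewrite oner_eq0.
Qed.

Lemma orth_lin_indep2 (x y : vec4 R) :
  dot4 x y = 0 -> dot4 x x != 0 -> dot4 y y != 0 -> lin_indep2 x y.
Proof.
move=> hxy hx hy a b H.
have e1 := dot40r x; rewrite -H dot4Dr hxy mulr0 addr0 in e1.
have e2 := dot40r y; rewrite -H dot4Dr (dot4C y x) hxy mulr0 add0r in e2.
move/eqP: e1; rewrite mulf_eq0 (negbTE hx) orbF => /eqP ->.
by move/eqP: e2; rewrite mulf_eq0 (negbTE hy) orbF => /eqP ->.
Qed.

Definition mk4 (a b c d : R) : vec4 R := \row_(j < 4) nth 0 [:: a; b; c; d] j.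

(* R^4 read as the quaternions, coordinates (1, i, j, k). *)
Definition qmul (a b : vec4 R) : vec4 R :=
  let a0 := a 0 o0 in let a1 := a 0 o1 in let a2 := a 0 o2 in let a3 := a 0 o3 in
  let b0 := b 0 o0 in let b1 := b 0 o1 in let b2 := b 0 o2 in let b3 := b 0 o3 in
  mk4 (a0*b0 - a1*b1 - a2*b2 - a3*b3)
      (a0*b1 + a1*b0 + a2*b3 - a3*b2)
      (a0*b2 - a1*b3 + a2*b0 + a3*b1)
      (a0*b3 + a1*b2 - a2*b1 + a3*b0).

Definition qconj (a : vec4 R) : vec4 R := mk4 (a 0 o0) (- a 0 o1) (- a 0 o2) (- a 0 o3).

Ltac qsimp := rewrite ?dot4E /qmul /qconj /mk4 ?mxE /=.

Lemma dot4_qmul_pure (x r : vec4 R) : r 0 o0 = 0 -> dot4 x (qmul x r) = 0.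
Proof. by move=> r0; qsimp; rewrite r0; ring. Qed.

Lemma dot4_qmul_conj (x y r : vec4 R) : dot4 y (qmul x r) = dot4 r (qmul (qconj x) y).
Proof. by qsimp; ring. Qed.

Lemma dot4_qmul_pure_conj (x y r : vec4 R) : r 0 o0 = 0 ->
  dot4 x (qmul y r) = - dot4 r (qmul (qconj x) y).
Proof. by move=> r0; qsimp; rewrite r0; ring. Qed.

Lemma dot4_qmulr (x y r : vec4 R) : dot4 (qmul x r) (qmul y r) = dot4 r r * dot4 x y.
Proof. by qsimp; ring. Qed.

Lemma exists_pure_orth (p : vec4 R) :
  exists r : vec4 R, [/\ r 0 o0 = 0, dot4 r p = 0 & dot4 r r != 0].
Proof.
have [h|h] := eqVneq (p 0 o1 ^+ 2 + p 0 o2 ^+ 2) 0.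
  have /eqP : p 0 o1 ^+ 2 = 0.
    by have := sqr_ge0 (p 0 o1); have := sqr_ge0 (p 0 o2); lra.
  rewrite sqrf_eq0 => /eqP p1.
  exists (mk4 0 1 0 0); rewrite !dot4E /mk4 !mxE /= p1; split => //; first by ring.
  by rewrite mul0r mul1r !addr0 add0r oner_neq0.
exists (mk4 0 (- p 0 o2) (p 0 o1) 0); rewrite !dot4E /mk4 !mxE /=; split => //.
  by ring.
by have -> : 0 * 0 + - p 0 o2 * - p 0 o2 + p 0 o1 * p 0 o1 + 0 * 0 =
  p 0 o1 ^+ 2 + p 0 o2 ^+ 2 by ring.
Qed.

Definition orth_frame (f : 'I_4 -> vec4 R) : Prop :=
  (forall r s, r != s -> dot4 (f r) (f s) = 0) /\ forall r, dot4 (f r) (f r) != 0.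

Definition frame4 (a b c d : vec4 R) (i : 'I_4) : vec4 R := nth 0 [:: a; b; c; d] i.

Lemma orth_frame4 a b c d :
  dot4 a b = 0 -> dot4 a c = 0 -> dot4 a d = 0 ->
  dot4 b c = 0 -> dot4 b d = 0 -> dot4 c d = 0 ->
  dot4 a a != 0 -> dot4 b b != 0 -> dot4 c c != 0 -> dot4 d d != 0 ->
  orth_frame (frame4 a b c d).
Proof.
move=> ab ac ad bc bd cd na nb nc nd; split.
  by move=> [[|[|[|[|?]]]] ?] [[|[|[|[|?]]]] ?] //= _; rewrite /frame4 /=;
    rewrite // dot4C.
by move=> [[|[|[|[|?]]]] ?].
Qed.

(* If u = e1, w = e2 are orthogonal, right multiplication by a pure quaternion r
   orthogonal to conj(u) w gives e3 = u r, e4 = w r. *)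
Lemma orth_frame_completion (u w : vec4 R) :
  dot4 u w = 0 -> dot4 u u != 0 -> dot4 w w != 0 ->
  exists g3 g4, orth_frame (frame4 u w g3 g4).
Proof.
move=> uw nu nw.
have [r [r0 rp nr]] := exists_pure_orth (qmul (qconj u) w).
exists (qmul u r), (qmul w r); apply: orth_frame4 => //.
- exact: dot4_qmul_pure.
- by rewrite dot4_qmul_pure_conj // rp oppr0.
- by rewrite dot4_qmul_conj.
- exact: dot4_qmul_pure.
- by rewrite dot4_qmulr uw mulr0.
- by rewrite dot4_qmulr mulf_neq0.
- by rewrite dot4_qmulr mulf_neq0.
Qed.

End Euclid4.

Section Curvature.
Variable R : realType.
Variable Rm : 'I_4 -> 'I_4 -> 'I_4 -> 'I_4 -> R.
Hypothesis HRm : is_curvature_tensor Rm.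
Hypothesis Hric : ricci_flat Rm.

Lemma curv4_lin2 x y z w t (a b : R) :
  curv4 Rm x (a *: y + b *: z) w t = a * curv4 Rm x y w t + b * curv4 Rm x z w t.
Proof.
rewrite /curv4 !mulr_sumr -big_split; apply: eq_bigr => i _.
rewrite !mulr_sumr -big_split; apply: eq_bigr => j _.
rewrite !mulr_sumr -big_split; apply: eq_bigr => k _.
rewrite !mulr_sumr -big_split; apply: eq_bigr => l _.
by rewrite !mxE /=; ring.
Qed.

Lemma curv4_lin3 x y z w t (a b : R) :
  curv4 Rm x y (a *: z + b *: w) t = a * curv4 Rm x y z t + b * curv4 Rm x y w t.
Proof.
rewrite /curv4 !mulr_sumr -big_split; apply: eq_bigr => i _.
rewrite !mulr_sumr -big_split; apply: eq_bigr => j _.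
rewrite !mulr_sumr -big_split; apply: eq_bigr => k _.
rewrite !mulr_sumr -big_split; apply: eq_bigr => l _.
by rewrite !mxE /=; ring.
Qed.

Lemma curv4_alt12 x z w : curv4 Rm x x z w = 0.
Proof.
case: HRm => anti12 _ _ _.
set S := curv4 _ _ _ _ _; suff : S = - S by lra.
rewrite {1}/S /curv4 exchange_big /= -sumrN; apply: eq_bigr => i _.
rewrite -sumrN; apply: eq_bigr => j _.
rewrite -sumrN; apply: eq_bigr => k _.
rewrite -sumrN; apply: eq_bigr => l _.
by rewrite anti12; ring.
Qed.

Lemma curv4_alt34 x y z : curv4 Rm x y z z = 0.
Proof.
case: HRm => _ anti34 _ _.
set S := curv4 _ _ _ _ _; suff : S = - S by lra.
rewrite {1}/S /curv4 -sumrN; apply: eq_bigr => i _.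
rewrite -sumrN; apply: eq_bigr => j _.
rewrite [in LHS]exchange_big /= -sumrN; apply: eq_bigr => k _.
rewrite -sumrN; apply: eq_bigr => l _.
by rewrite anti34; ring.
Qed.

Definition curv_form (x : vec4 R) (j k : 'I_4) : R :=
  \sum_(i < 4) \sum_(l < 4) Rm i j k l * x 0 i * x 0 l.

Lemma curv4_quad x y :
  curv4 Rm x y y x = \sum_(j < 4) \sum_(k < 4) y 0 j * y 0 k * curv_form x j k.
Proof.
rewrite /curv4 exchange_big /=; apply: eq_bigr => j _.
rewrite exchange_big /=; apply: eq_bigr => k _.
rewrite /curv_form mulr_sumr; apply: eq_bigr => i _.
by rewrite mulr_sumr; apply: eq_bigr => l _; ring.
Qed.

Lemma trace_curv_form x : \sum_(j < 4) curv_form x j j = 0.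
Proof.
case: HRm => anti12 anti34 _ _.
rewrite /curv_form exchange_big /= big1 // => i _.
rewrite exchange_big /= big1 // => l _.
have -> : \sum_(j < 4) Rm i j j l * x 0 i * x 0 l =
          (\sum_(j < 4) Rm j i l j) * x 0 i * x 0 l.
  by rewrite !mulr_suml; apply: eq_bigr => j _; rewrite anti12 anti34 opprK.
by have := Hric i l; rewrite /ricci => ->; rewrite !mul0r.
Qed.

Lemma orth_frame_resolution (f : 'I_4 -> vec4 R) j k : orth_frame f ->
  \sum_(r < 4) f r 0 j * f r 0 k / dot4 (f r) (f r) = (j == k)%:R.
Proof.
(* Orthogonality says F (F^T D) = 1; the claim is the entries of (F^T D) F = 1. *)
move=> [f_orth f_nz].
pose F : 'M[R]_4 := \matrix_(r, j) f r 0 j.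
pose D : 'M[R]_4 := diag_mx (\row_r (dot4 (f r) (f r))^-1).
have FFD : F *m (F^T *m D) = 1%:M.
  rewrite mulmxA; apply/matrixP => a b.
  rewrite mul_mx_diag !mxE.
  have -> : \sum_(c < 4) F a c * F^T c b = dot4 (f a) (f b).
    by rewrite /dot4; apply: eq_bigr => c _; rewrite !mxE.
  by have [->|ne] := eqVneq a b; [rewrite mulfV | rewrite f_orth // mul0r].
move/matrixP: (mulmx1C FFD) => /(_ j k); rewrite !mxE => <-.
by apply: eq_bigr => r _; rewrite mul_mx_diag !mxE; ring.
Qed.

(* The trace of y |-> curv4 x y y x is basis independent: computing it in the
   frame f and in the standard basis (where it is a Ricci component) agree. *)
Lemma orth_frame_ricci_trace (f : 'I_4 -> vec4 R) x : orth_frame f ->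
  \sum_(r < 4) curv4 Rm x (f r) (f r) x / dot4 (f r) (f r) = 0.
Proof.
move=> Hf; transitivity (\sum_(j < 4) curv_form x j j); last exact: trace_curv_form.
under eq_bigr => r _ do rewrite curv4_quad mulr_suml.
rewrite exchange_big /=; apply: eq_bigr => j _.
under eq_bigr => r _ do rewrite mulr_suml.
rewrite exchange_big /= (bigD1 j) //= [X in _ + X]big1 ?addr0.
  transitivity (curv_form x j j * \sum_(r < 4) f r 0 j * f r 0 j / dot4 (f r) (f r)).
    by rewrite mulr_sumr; apply: eq_bigr => r _; ring.
  by rewrite orth_frame_resolution // eqxx mulr1.
move=> k /negbTE nkj.
transitivity (curv_form x j k * \sum_(r < 4) f r 0 j * f r 0 k / dot4 (f r) (f r)).
  by rewrite mulr_sumr; apply: eq_bigr => r _; ring.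
by rewrite orth_frame_resolution // eq_sym nkj mulr0.
Qed.

Lemma sectional_orth (x y : vec4 R) : dot4 x y = 0 ->
  sectional Rm x y = curv4 Rm x y y x / (dot4 x x * dot4 y y).
Proof. by move=> h; rewrite /sectional h expr2 mulr0 subr0. Qed.

Lemma orth_frame_sectional_sum u w g3 g4 : orth_frame (frame4 u w g3 g4) ->
  sectional Rm u w + sectional Rm u g3 + sectional Rm u g4 = 0.
Proof.
move=> Hf; have := orth_frame_ricci_trace u Hf.
case: Hf => orth nz.
have uw : dot4 u w = 0 := orth o0 o1 isT.
have ug3 : dot4 u g3 = 0 := orth o0 o2 isT.
have ug4 : dot4 u g4 = 0 := orth o0 o3 isT.
have nu : dot4 u u != 0 := nz o0.
have nw : dot4 w w != 0 := nz o1.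
have n3 : dot4 g3 g3 != 0 := nz o2.
have n4 : dot4 g4 g4 != 0 := nz o3.
rewrite !big_ord_recl big_ord0 /frame4 /= curv4_alt12 mul0r add0r addr0.
rewrite !sectional_orth // => E.
have -> : curv4 Rm u w w u / (dot4 u u * dot4 w w) +
          curv4 Rm u g3 g3 u / (dot4 u u * dot4 g3 g3) +
          curv4 Rm u g4 g4 u / (dot4 u u * dot4 g4 g4) =
          (curv4 Rm u w w u / dot4 w w + (curv4 Rm u g3 g3 u / dot4 g3 g3 +
           curv4 Rm u g4 g4 u / dot4 g4 g4)) / dot4 u u.
  by field; rewrite nu nw n3 n4.
by rewrite E mul0r.
Qed.

Lemma sectional_gram_schmidt (u v : vec4 R) : lin_indep2 u v ->
  exists w, [/\ dot4 u w = 0, dot4 w w != 0 & sectional Rm u w = sectional Rm u v].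
Proof.
move=> Hi; have nu := lin_indep2_dot4_neq0 Hi.
pose w := dot4 u u *: v + (- dot4 u v) *: u.
have nwE : dot4 w w = dot4 u u * (dot4 u u * dot4 v v - dot4 u v ^+ 2).
  by rewrite /w !dot4E !mxE /=; ring.
have nw : dot4 w w != 0.
  apply/eqP => /dot4_eq0 w0.
  have [] := Hi (- dot4 u v) (dot4 u u); first by rewrite addrC; exact: w0.
  by move=> _ /eqP; rewrite (negbTE nu).
have nD : dot4 u u * dot4 v v - dot4 u v ^+ 2 != 0.
  by apply: contraNneq nw => h; rewrite nwE h mulr0.
have uw : dot4 u w = 0 by rewrite dot4Dr; ring.
exists w; split => //.
have cE : curv4 Rm u w w u = dot4 u u ^+ 2 * curv4 Rm u v v u.
  by rewrite /w curv4_lin2 !curv4_lin3 !curv4_alt12 !curv4_alt34; ring.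
by rewrite sectional_orth // cE nwE /sectional; field; rewrite nu nD.
Qed.

Lemma sectional_opposite_pair (u v : vec4 R) : lin_indep2 u v ->
  exists y z, [/\ sectional_values Rm y, sectional_values Rm z &
                  y + z = - sectional Rm u v].
Proof.
move=> Hi; have nu := lin_indep2_dot4_neq0 Hi.
have [w [uw nw <-]] := sectional_gram_schmidt Hi.
have [g3 [g4 Hf]] := orth_frame_completion uw nu nw.
have E := orth_frame_sectional_sum Hf.
case: Hf => orth nz.
exists (sectional Rm u g3), (sectional Rm u g4); split; last by lra.
- by exists u, g3; split => //; apply: orth_lin_indep2 (orth o0 o2 isT) nu (nz o2).
- by exists u, g4; split => //; apply: orth_lin_indep2 (orth o0 o3 isT) nu (nz o3).
Qed.

End Curvature.

Theorem corollary2p4 (R : realType) (Rm : 'I_4 -> 'I_4 -> 'I_4 -> 'I_4 -> R) :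
  is_curvature_tensor Rm -> ricci_flat Rm ->
  - (1 / 2) * Kmin Rm <= Kmax Rm /\ Kmax Rm <= - 2 * Kmin Rm.
Proof.
move=> HRm Hric; apply: sup_inf_of_opposite_pairs => x [u [v [Hi ->]]].
exact: sectional_opposite_pair.
Qed.
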